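(* Let $I\subset\mathbb{R}$ be an open interval, let $\bm{a}:I\to\mathbb{R}^2_1$ be a frontal and $r:I\to\mathbb{R}^+$ a smooth positive function, and suppose the pseudo-circle family $C_{(\bm{a}(t),\pm r(t))}$ creates an envelope. Let $E_2$ denote the union of the images of all envelopes created by this family. Then: (1) $\mathcal{D}=E_2$ if $\bm{a}$ is regular at every $t\in I$; (2) $\mathcal{D}=E_2\cup C_{(\bm{a}(t_1),\pm r(t_1))}\cup\cdots\cup C_{(\bm{a}(t_k),\pm r(t_k))}$ if $t_1,\ldots,t_k$ are the singular points of $\bm{a}$.
   Context: All objects are $C^\infty$. The Minkowski plane $\mathbb{R}^2_1$ is $\mathbb{R}^2$ with $\langle\bm{x},\bm{y}\rangle=-x_1y_1+x_2y_2$ and $\|\bm{x}\|^2:=\langle\bm{x},\bm{x}\rangle$; $S^1_1=\{\bm{x}:\langle\bm{x},\bm{x}\rangle=1\}$, $H^1=\{\bm{x}:\langle\bm{x},\bm{x}\rangle=-1\}$. A smooth $\bm{a}:I\to\mathbb{R}^2_1$ is a frontal if there is a smooth $\bm{\nu}:I\to H^1$ or $S^1_1$ with $\langle\frac{d\bm{a}}{dt}(t),\bm{\nu}(t)\rangle=0$ for all $t$; $t$ is a singular point of $\bm{a}$ if $\frac{d\bm{a}}{dt}(t)=0$, and regular otherwise. $C_{(\bm{a}(t),\pm r(t))}=\{\bm{x}:\langle\bm{x}-\bm{a}(t),\bm{x}-\bm{a}(t)\rangle=\pm r(t)^2\}$ (same sign throughout). An envelope of this family is a smooth $f:I\to\mathbb{R}^2_1$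 with $f(t)\in C_{(\bm{a}(t),\pm r(t))}$ and $\langle\frac{df}{dt}(t),f(t)-\bm{a}(t)\rangle=0$ for all $t$. With $F(x,y,t)=\|(x,y)-\bm{a}(t)\|^2\mp r(t)^2$, the $\mathcal{D}$ envelope is $\mathcal{D}=\{(x,y)\in\mathbb{R}^2_1:\exists t\in I,\ F(x,y,t)=\frac{\partial F}{\partial t}(x,y,t)=0\}$. *)

From Stdlib Require Import Reals List.
From Coquelicot Require Import Coquelicot.
Open Scope R_scope.

Definition inI (lo hi : Rbar) (t : R) : Prop := Rbar_lt lo t /\ Rbar_lt t hi.

Definition smooth_on (lo hi : Rbar) (f : R -> R) : Prop :=
  forall (n : nat) (t : R), inI lo hi t -> ex_derive_n f n t.

Definition mink (x1 x2 y1 y2 : R) : R := - x1 * y1 + x2 * y2.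

(* a = (a1,a2) : I -> R^2_1 is a frontal: there is a smooth
   nu : I -> H^1 or nu : I -> S^1_1 with <a'(t), nu(t)> = 0. *)
Definition frontal (lo hi : Rbar) (a1 a2 : R -> R) : Prop :=
  smooth_on lo hi a1 /\ smooth_on lo hi a2 /\
  exists nu1 nu2 : R -> R,
    smooth_on lo hi nu1 /\ smooth_on lo hi nu2 /\
    ((forall t, inI lo hi t -> mink (nu1 t) (nu2 t) (nu1 t) (nu2 t) = -1) \/
     (forall t, inI lo hi t -> mink (nu1 t) (nu2 t) (nu1 t) (nu2 t) = 1)) /\
    (forall t, inI lo hi t -> mink (Derive a1 t) (Derive a2 t) (nu1 t) (nu2 t) = 0).

Definition singular_pt (a1 a2 : R -> R) (t : R) : Prop :=
  Derive a1 t = 0 /\ Derive a2 t = 0.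

(* Pseudo-circle C_(a(t), eps r(t)) with eps = +1 or -1 (fixed sign):
   {x | <x - a(t), x - a(t)> = eps r(t)^2}. *)
Definition pcircle (eps : R) (a1 a2 r : R -> R) (t : R) (p : R * R) : Prop :=
  mink (fst p - a1 t) (snd p - a2 t) (fst p - a1 t) (snd p - a2 t) = eps * (r t)^2.

Definition envelope (lo hi : Rbar) (eps : R) (a1 a2 r f1 f2 : R -> R) : Prop :=
  smooth_on lo hi f1 /\ smooth_on lo hi f2 /\
  (forall t, inI lo hi t -> pcircle eps a1 a2 r t (f1 t, f2 t)) /\
  (forall t, inI lo hi t ->
     mink (Derive f1 t) (Derive f2 t) (f1 t - a1 t) (f2 t - a2 t) = 0).

Definition E2 (lo hi : Rbar) (eps : R) (a1 a2 r : R -> R) (p : R * R) : Prop :=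
  exists f1 f2 : R -> R, envelope lo hi eps a1 a2 r f1 f2 /\
    exists t, inI lo hi t /\ p = (f1 t, f2 t).

Definition Ffam (eps : R) (a1 a2 r : R -> R) (x y t : R) : R :=
  mink (x - a1 t) (y - a2 t) (x - a1 t) (y - a2 t) - eps * (r t)^2.

Definition Denv (lo hi : Rbar) (eps : R) (a1 a2 r : R -> R) (p : R * R) : Prop :=
  exists t, inI lo hi t /\
    Ffam eps a1 a2 r (fst p) (snd p) t = 0 /\
    Derive (fun s => Ffam eps a1 a2 r (fst p) (snd p) s) t = 0.

(* Differentiating <f - a, f - a> = eps r^2 along an envelope f and using
   <f', f - a> = 0 gives <a', f - a> = - eps r r'; the same two equations at a
   parameter t cut out the points of D coming from t, the characteristic points
   of the pseudo-circle at t.  At a singular point a' = 0, so the existing envelope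
   forces r' = 0 there and the whole pseudo-circle is characteristic.  At a regular
   point the characteristic points lie on the line f(t) + R nu(t) (nu spans the
   Minkowski orthogonal of a'), which meets the pseudo-circle exactly in f(t) and in
   its reflection f - 2 <f - a, nu> / <nu, nu> nu; this reflection of f is again an
   envelope, since it lies on the pseudo-circles and satisfies the same equation. *)

From Stdlib Require Import Reals List Lra Lia Classical.
From Coquelicot Require Import Coquelicot.
Open Scope R_scope.

Section Smoothness.

Variables lo hi : Rbar.

Lemma inI_locally t : inI lo hi t -> locally t (inI lo hi).
Proof. intros [Hlo Hhi]. apply (locally_interval _ t lo hi Hlo Hhi). now split. Qed.

Lemma ex_derive_n_S (f : R -> R) k t :
  ex_derive f t -> ex_derive_n (Derive f) k t -> ex_derive_n f (S k) t.
Proof.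
  destruct k as [|k]; simpl; intros Hf Hdf; [exact Hf|].
  eapply ex_derive_ext; [|exact Hdf]. intros s.
  rewrite (Derive_n_comp f k 1). now rewrite Nat.add_1_r.
Qed.

Lemma smooth_on_Derive f : smooth_on lo hi f -> smooth_on lo hi (Derive f).
Proof.
  intros Hf [|n] t Ht; [exact I|]. simpl.
  eapply ex_derive_ext; [|exact (Hf (S (S n)) t Ht)]. intros s.
  rewrite (Derive_n_comp f n 1). now rewrite Nat.add_1_r.
Qed.

Lemma smooth_on_ex_derive f t : smooth_on lo hi f -> inI lo hi t -> ex_derive f t.
Proof. intros Hf Ht. exact (Hf 1%nat t Ht). Qed.

Lemma smooth_on_locally f n t : smooth_on lo hi f -> inI lo hi t ->
  locally t (fun s => forall k, (k <= n)%nat -> ex_derive_n f k s).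
Proof.
  intros Hf Ht. eapply filter_imp; [|exact (inI_locally t Ht)].
  intros s Hs k _. now apply Hf.
Qed.

Lemma smooth_on_const c : smooth_on lo hi (fun _ => c).
Proof. intros n t _. apply ex_derive_n_const. Qed.

Lemma smooth_on_opp f : smooth_on lo hi f -> smooth_on lo hi (fun x => - f x).
Proof. intros Hf n t Ht. now apply ex_derive_n_opp, Hf. Qed.

Lemma smooth_on_plus f g : smooth_on lo hi f -> smooth_on lo hi g ->
  smooth_on lo hi (fun x => f x + g x).
Proof.
  intros Hf Hg n t Ht. now apply ex_derive_n_plus; apply smooth_on_locally.
Qed.

Lemma smooth_on_minus f g : smooth_on lo hi f -> smooth_on lo hi g ->
  smooth_on lo hi (fun x => f x - g x).
Proof. intros Hf Hg. exact (smooth_on_plus _ _ Hf (smooth_on_opp _ Hg)). Qed.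

Lemma smooth_on_mult f g : smooth_on lo hi f -> smooth_on lo hi g ->
  smooth_on lo hi (fun x => f x * g x).
Proof.
  enough (H : forall n f g, smooth_on lo hi f -> smooth_on lo hi g ->
            forall t, inI lo hi t -> forall k, (k <= n)%nat ->
            ex_derive_n (fun x => f x * g x) k t).
  { intros Hf Hg n t Ht. now apply (H n). }
  clear f g. induction n as [|n IH]; intros f g Hf Hg t Ht [|k] Hk; try exact I.
  - lia.
  - apply ex_derive_n_S.
    { apply ex_derive_mult; now apply smooth_on_ex_derive. }
    (* (f g)' = f' g + f g' is a sum of products of smooth functions, one order lower *)
    apply (ex_derive_n_ext_loc (fun x => Derive f x * g x + f x * Derive g x)).
    { eapply filter_imp; [|exact (inI_locally t Ht)]. intros s Hs.
      symmetry. apply Derive_mult; now apply smooth_on_ex_derive. }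
    pose proof (smooth_on_Derive _ Hf) as Hf'. pose proof (smooth_on_Derive _ Hg) as Hg'.
    apply ex_derive_n_plus; eapply filter_imp; try exact (inI_locally t Ht);
      intros s Hs j Hj; apply IH; auto; lia.
Qed.

Lemma smooth_on_mink x1 x2 y1 y2 :
  smooth_on lo hi x1 -> smooth_on lo hi x2 -> smooth_on lo hi y1 -> smooth_on lo hi y2 ->
  smooth_on lo hi (fun s => mink (x1 s) (x2 s) (y1 s) (y2 s)).
Proof.
  intros. unfold mink.
  apply smooth_on_plus; apply smooth_on_mult; auto. now apply smooth_on_opp.
Qed.

End Smoothness.

Lemma mink_orth_collinear v1 v2 n1 n2 d1 d2 :
  ~ (v1 = 0 /\ v2 = 0) -> mink v1 v2 n1 n2 = 0 -> mink v1 v2 d1 d2 = 0 ->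
  d1 * n2 = d2 * n1.
Proof.
  intros Hv Hn Hd.
  assert (H1 : v1 * (d1 * n2 - d2 * n1) = d2 * mink v1 v2 n1 n2 - n2 * mink v1 v2 d1 d2)
    by (unfold mink; ring).
  assert (H2 : v2 * (d1 * n2 - d2 * n1) = d1 * mink v1 v2 n1 n2 - n1 * mink v1 v2 d1 d2)
    by (unfold mink; ring).
  rewrite Hn, Hd, Rmult_0_r, Rmult_0_r, Rminus_0_r in H1, H2.
  destruct (Req_dec v1 0) as [Z1|Z1]; [destruct (Req_dec v2 0) as [Z2|Z2]|].
  - exfalso. now apply Hv.
  - apply Rmult_integral in H2. lra.
  - apply Rmult_integral in H1. lra.
Qed.

Lemma mink_reflect_norm sg w1 w2 n1 n2 :
  sg <> 0 -> mink n1 n2 n1 n2 = sg ->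
  mink (w1 - 2 / sg * mink w1 w2 n1 n2 * n1) (w2 - 2 / sg * mink w1 w2 n1 n2 * n2)
       (w1 - 2 / sg * mink w1 w2 n1 n2 * n1) (w2 - 2 / sg * mink w1 w2 n1 n2 * n2)
  = mink w1 w2 w1 w2.
Proof. intros Hsg Hn. rewrite <- Hn in *. unfold mink in *. field. auto. Qed.

Lemma mink_reflect_cases sg v1 v2 n1 n2 w1 w2 u1 u2 :
  sg <> 0 -> mink n1 n2 n1 n2 = sg ->
  ~ (v1 = 0 /\ v2 = 0) -> mink v1 v2 n1 n2 = 0 ->
  mink v1 v2 u1 u2 = mink v1 v2 w1 w2 -> mink u1 u2 u1 u2 = mink w1 w2 w1 w2 ->
  (u1 = w1 /\ u2 = w2) \/
  (u1 = w1 - 2 / sg * mink w1 w2 n1 n2 * n1 /\ u2 = w2 - 2 / sg * mink w1 w2 n1 n2 * n2).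
Proof.
  intros Hsg Hn Hv Hvn Hvu Huu. set (k := 2 / sg * mink w1 w2 n1 n2).
  assert (Hcol : (u1 - w1) * n2 - (u2 - w2) * n1 = 0).
  { apply Rminus_diag_eq, (mink_orth_collinear v1 v2); auto. unfold mink in *. lra. }
  (* u - w is orthogonal to v, hence a multiple lam of n *)
  set (lam := mink (u1 - w1) (u2 - w2) n1 n2 / sg).
  assert (Hu1 : u1 = w1 + lam * n1).
  { assert (E : (u1 - w1) * sg - lam * sg * n1 = n2 * ((u1 - w1) * n2 - (u2 - w2) * n1)).
    { unfold lam. rewrite <- Hn at 1. unfold mink. field. auto. }
    rewrite Hcol, Rmult_0_r in E. apply (Rmult_eq_reg_r sg); auto; lra. }
  assert (Hu2 : u2 = w2 + lam * n2).
  { assert (E : (u2 - w2) * sg - lam * sg * n2 = n1 * ((u1 - w1) * n2 - (u2 - w2) * n1)).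
    { unfold lam. rewrite <- Hn at 1. unfold mink. field. auto. }
    rewrite Hcol, Rmult_0_r in E. apply (Rmult_eq_reg_r sg); auto; lra. }
  assert (Hlam : lam * sg * (lam + k) = 0).
  { rewrite Hu1, Hu2 in Huu. unfold k.
    replace (lam * sg * (lam + 2 / sg * mink w1 w2 n1 n2))
      with (mink (w1 + lam * n1) (w2 + lam * n2) (w1 + lam * n1) (w2 + lam * n2)
            - mink w1 w2 w1 w2 + lam * lam * (sg - mink n1 n2 n1 n2))
      by (unfold mink; field; auto).
    rewrite Huu, Hn. ring. }
  apply Rmult_integral in Hlam as [Hlam|Hlam].
  - left. apply Rmult_integral in Hlam as [Z|Z]; [|contradiction].
    rewrite Z in Hu1, Hu2. lra.
  - right. replace lam with (- k) in * by lra. lra.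
Qed.

(* [auto_derive] states derivatives of a function [f] as [Derive (fun x => f x)] *)
Ltac eta_Derive :=
  repeat match goal with
  | |- context [Derive (fun x : R => ?f x) ?t] =>
      change (Derive (fun x : R => f x) t) with (Derive f t)
  end.

Section Envelopes.

Variables (lo hi : Rbar) (eps : R) (a1 a2 r : R -> R).
Hypotheses (Ha1 : smooth_on lo hi a1) (Ha2 : smooth_on lo hi a2) (Hr : smooth_on lo hi r).

Definition char_point (t : R) (p : R * R) : Prop :=
  pcircle eps a1 a2 r t p /\
  mink (Derive a1 t) (Derive a2 t) (fst p - a1 t) (snd p - a2 t) = - (eps * r t * Derive r t).

Lemma Derive_Ffam x y t : inI lo hi t ->
  Derive (fun s => Ffam eps a1 a2 r x y s) t =
  -2 * (mink (Derive a1 t) (Derive a2 t) (x - a1 t) (y - a2 t) + eps * r t * Derive r t).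
Proof.
  intros Ht. apply is_derive_unique. unfold Ffam, mink.
  pose proof (smooth_on_ex_derive _ _ _ _ Ha1 Ht).
  pose proof (smooth_on_ex_derive _ _ _ _ Ha2 Ht).
  pose proof (smooth_on_ex_derive _ _ _ _ Hr Ht).
  auto_derive; [tauto|]. eta_Derive. ring.
Qed.

Lemma Denv_char_point p :
  Denv lo hi eps a1 a2 r p <-> exists t, inI lo hi t /\ char_point t p.
Proof.
  unfold Denv, char_point.
  split; intros [t [Ht [Hc Hd]]]; exists t; split; try exact Ht;
    rewrite ?Derive_Ffam in * by exact Ht; unfold pcircle, Ffam in *; split; lra.
Qed.

Lemma Derive_pcircle h1 h2 t : inI lo hi t ->
  smooth_on lo hi h1 -> smooth_on lo hi h2 ->
  (forall s, inI lo hi s -> pcircle eps a1 a2 r s (h1 s, h2 s)) ->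
  mink (h1 t - a1 t) (h2 t - a2 t) (Derive h1 t - Derive a1 t) (Derive h2 t - Derive a2 t)
  = eps * r t * Derive r t.
Proof.
  intros Ht Hh1 Hh2 Hc.
  assert (E : Derive (fun s => mink (h1 s - a1 s) (h2 s - a2 s) (h1 s - a1 s) (h2 s - a2 s)) t
            = Derive (fun s => eps * r s ^ 2) t).
  { apply Derive_ext_loc. eapply filter_imp; [|exact (inI_locally _ _ t Ht)].
    intros s Hs. exact (Hc s Hs). }
  pose proof (smooth_on_ex_derive _ _ _ _ Ha1 Ht).
  pose proof (smooth_on_ex_derive _ _ _ _ Ha2 Ht).
  pose proof (smooth_on_ex_derive _ _ _ _ Hr Ht).
  pose proof (smooth_on_ex_derive _ _ _ _ Hh1 Ht).
  pose proof (smooth_on_ex_derive _ _ _ _ Hh2 Ht).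
  assert (Dl : is_derive
    (fun s => mink (h1 s - a1 s) (h2 s - a2 s) (h1 s - a1 s) (h2 s - a2 s)) t
    (2 * mink (h1 t - a1 t) (h2 t - a2 t) (Derive h1 t - Derive a1 t) (Derive h2 t - Derive a2 t))).
  { unfold mink. auto_derive; [tauto|]. eta_Derive. ring. }
  assert (Dr : is_derive (fun s => eps * r s ^ 2) t (2 * (eps * r t * Derive r t))).
  { auto_derive; [tauto|]. eta_Derive. ring. }
  apply (Rmult_eq_reg_l 2); [|lra].
  rewrite <- (is_derive_unique _ _ _ Dl), <- (is_derive_unique _ _ _ Dr). exact E.
Qed.

Lemma envelope_char_point_iff h1 h2 :
  smooth_on lo hi h1 -> smooth_on lo hi h2 ->
  (forall s, inI lo hi s -> pcircle eps a1 a2 r s (h1 s, h2 s)) ->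
  envelope lo hi eps a1 a2 r h1 h2 <-> forall t, inI lo hi t -> char_point t (h1 t, h2 t).
Proof.
  intros Hh1 Hh2 Hc. unfold envelope, char_point.
  split; [intros [_ [_ [_ He]]] t Ht | intros Hch; repeat split; auto; intros t Ht];
    pose proof (Derive_pcircle h1 h2 t Ht Hh1 Hh2 Hc) as E; simpl.
  - split; [exact (Hc t Ht)|]. specialize (He t Ht). unfold mink in *. lra.
  - destruct (Hch t Ht) as [_ Ha]. simpl in Ha. unfold mink in *. lra.
Qed.

Lemma envelope_char_point h1 h2 t :
  envelope lo hi eps a1 a2 r h1 h2 -> inI lo hi t -> char_point t (h1 t, h2 t).
Proof.
  intros Hh Ht. destruct Hh as (Hh1 & Hh2 & Hc & He).
  now apply (envelope_char_point_iff h1 h2 Hh1 Hh2 Hc).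
Qed.

Lemma E2_Denv p : E2 lo hi eps a1 a2 r p -> Denv lo hi eps a1 a2 r p.
Proof.
  intros (h1 & h2 & Hh & t & Ht & ->). apply Denv_char_point.
  exists t. split; [exact Ht|]. now apply envelope_char_point.
Qed.

Lemma char_point_singular_iff f1 f2 t p :
  envelope lo hi eps a1 a2 r f1 f2 -> inI lo hi t -> eps <> 0 -> r t <> 0 ->
  singular_pt a1 a2 t -> char_point t p <-> pcircle eps a1 a2 r t p.
Proof.
  intros Hf Ht Heps Hrt [Hs1 Hs2].
  (* as a'(t) = 0, the characteristic point of the envelope at t forces r'(t) = 0 *)
  assert (Hr' : Derive r t = 0).
  { destruct (envelope_char_point f1 f2 t Hf Ht) as [_ Hch].
    rewrite Hs1, Hs2 in Hch. unfold mink in Hch.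
    assert (E : eps * r t * Derive r t = 0) by lra.
    apply Rmult_integral in E as [E|E]; [|exact E].
    apply Rmult_integral in E as [E|E]; contradiction. }
  unfold char_point. rewrite Hs1, Hs2, Hr'. unfold mink.
  split; [intros [Hc _]; exact Hc | intros Hc; split; [exact Hc | ring]].
Qed.

Section Reflection.

Variables (f1 f2 nu1 nu2 : R -> R) (sg : R).
Hypotheses (Hf : envelope lo hi eps a1 a2 r f1 f2)
  (Hnu1 : smooth_on lo hi nu1) (Hnu2 : smooth_on lo hi nu2) (Hsg : sg <> 0)
  (Hnu : forall t, inI lo hi t -> mink (nu1 t) (nu2 t) (nu1 t) (nu2 t) = sg)
  (Hort : forall t, inI lo hi t -> mink (Derive a1 t) (Derive a2 t) (nu1 t) (nu2 t) = 0).

Let k s := 2 / sg * mink (f1 s - a1 s) (f2 s - a2 s) (nu1 s) (nu2 s).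
Let g1 s := f1 s - k s * nu1 s.
Let g2 s := f2 s - k s * nu2 s.

Lemma envelope_reflect : envelope lo hi eps a1 a2 r g1 g2.
Proof.
  pose proof Hf as (Hf1 & Hf2 & Hfc & _).
  assert (Hk : smooth_on lo hi k).
  { apply smooth_on_mult; [apply smooth_on_const|].
    apply smooth_on_mink; auto; apply smooth_on_minus; auto. }
  assert (Hg1 : smooth_on lo hi g1) by (apply smooth_on_minus, smooth_on_mult; auto).
  assert (Hg2 : smooth_on lo hi g2) by (apply smooth_on_minus, smooth_on_mult; auto).
  assert (Hgc : forall t, inI lo hi t -> pcircle eps a1 a2 r t (g1 t, g2 t)).
  { intros t Ht. specialize (Hfc t Ht). unfold pcircle in *; simpl in *.
    rewrite <- Hfc, <- (mink_reflect_norm sg (f1 t - a1 t) (f2 t - a2 t) _ _ Hsg (Hnu t Ht)).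
    unfold g1, g2, k. f_equal; ring. }
  apply envelope_char_point_iff; auto. intros t Ht. split; [exact (Hgc t Ht)|].
  destruct (envelope_char_point f1 f2 t Hf Ht) as [_ Hch]. simpl in *.
  rewrite <- Hch. unfold g1, g2.
  transitivity (mink (Derive a1 t) (Derive a2 t) (f1 t - a1 t) (f2 t - a2 t)
                - k t * mink (Derive a1 t) (Derive a2 t) (nu1 t) (nu2 t)).
  - unfold mink. ring.
  - rewrite (Hort t Ht). ring.
Qed.

Lemma char_point_regular_E2 t p : inI lo hi t -> ~ singular_pt a1 a2 t ->
  char_point t p -> E2 lo hi eps a1 a2 r p.
Proof.
  intros Ht Hreg [Hpc Hpa]. destruct p as [x y]. simpl in Hpa.
  destruct (envelope_char_point f1 f2 t Hf Ht) as [Hfc Hfa]. simpl in Hfa.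
  unfold pcircle in Hpc, Hfc; simpl in Hpc, Hfc.
  destruct (mink_reflect_cases sg (Derive a1 t) (Derive a2 t) (nu1 t) (nu2 t)
              (f1 t - a1 t) (f2 t - a2 t) (x - a1 t) (y - a2 t)
              Hsg (Hnu t Ht) Hreg (Hort t Ht) (eq_trans Hpa (eq_sym Hfa))
              (eq_trans Hpc (eq_sym Hfc))) as [[Ex Ey]|[Ex Ey]].
  - exists f1, f2. split; [exact Hf|]. exists t. split; [exact Ht|]. f_equal; lra.
  - exists g1, g2. split; [exact envelope_reflect|]. exists t. split; [exact Ht|].
    unfold g1, g2, k. f_equal; lra.
Qed.

End Reflection.

End Envelopes.

Theorem theorem5 (lo hi : Rbar) (eps : R) (a1 a2 r : R -> R) :
  Rbar_lt lo hi ->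
  (eps = 1 \/ eps = -1) ->
  frontal lo hi a1 a2 ->
  smooth_on lo hi r ->
  (forall t, inI lo hi t -> 0 < r t) ->
  (exists f1 f2 : R -> R, envelope lo hi eps a1 a2 r f1 f2) ->
  ((forall t, inI lo hi t -> ~ singular_pt a1 a2 t) ->
     forall p, Denv lo hi eps a1 a2 r p <-> E2 lo hi eps a1 a2 r p) /\
  (forall ts : list R,
     (forall t, (inI lo hi t /\ singular_pt a1 a2 t) <-> In t ts) ->
     forall p, Denv lo hi eps a1 a2 r p <->
       (E2 lo hi eps a1 a2 r p \/ exists t, In t ts /\ pcircle eps a1 a2 r t p)).
Proof.
  intros _ Heps (Ha1 & Ha2 & nu1 & nu2 & Hnu1 & Hnu2 & Hnn & Hort) Hr Hrpos (f1 & f2 & Hf).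
  assert (Hsg : exists sg, sg <> 0 /\
            forall t, inI lo hi t -> mink (nu1 t) (nu2 t) (nu1 t) (nu2 t) = sg).
  { destruct Hnn as [Hnn|Hnn]; eexists; split; try exact Hnn; lra. }
  destruct Hsg as (sg & Hsg & Hnu).
  assert (Hsing : forall t p, inI lo hi t -> singular_pt a1 a2 t ->
            char_point eps a1 a2 r t p <-> pcircle eps a1 a2 r t p).
  { intros t p Ht. specialize (Hrpos t Ht).
    apply (char_point_singular_iff lo hi eps a1 a2 r Ha1 Ha2 Hr f1 f2); auto; lra. }
  pose proof (char_point_regular_E2 lo hi eps a1 a2 r Ha1 Ha2 Hr f1 f2 nu1 nu2 sg
                Hf Hnu1 Hnu2 Hsg Hnu Hort) as Hreg.
  pose proof (Denv_char_point lo hi eps a1 a2 r Ha1 Ha2 Hr) as HD.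
  pose proof (E2_Denv lo hi eps a1 a2 r Ha1 Ha2 Hr) as HE2.
  split.
  - intros Hall p. split; [|exact (HE2 p)].
    rewrite HD. intros (t & Ht & Hch). exact (Hreg t p Ht (Hall t Ht) Hch).
  - intros ts Hts p. rewrite HD. split.
    + intros (t & Ht & Hch).
      destruct (classic (singular_pt a1 a2 t)) as [Hs|Hs].
      * right. exists t. split; [now apply Hts; split|]. exact (proj1 (Hsing t p Ht Hs) Hch).
      * left. exact (Hreg t p Ht Hs Hch).
    + intros [HE | (t & Hin & Hc)]; [now apply HD, HE2|].
      apply Hts in Hin as [Ht Hs].
      exists t. split; [exact Ht|]. exact (proj2 (Hsing t p Ht Hs) Hc).
Qed.
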